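(* Let $\theta>1$, $r\in(\theta^{-1},\theta^{-1/2}]$, $\rho\in(0,1]$, and $s=\frac1\rho\big(\frac{\ln\theta}{\ln(r\theta)}-2\big)$. Then \[ \max_{z\in[\frac1r,\ \frac1r+\rho(\theta-\frac1r)]}\frac{\Phi^\rho_r(z)^{s+1}}{z^{s}}\ \le\ r\theta. \]
   Context: Let $\varphi_r(z)=\frac{r\theta-1}{1-r}+\frac{1-r^2\theta}{1-r}\cdot\frac{z}{r\theta}$ (the line through $(r\theta,r\theta)$ and $(\theta,1/r)$). For $\rho\in(0,1]$ define $\Phi^\rho_r:[1,\theta]\to[1,\theta]$ by \[ \Phi^\rho_r(y)=\begin{cases} r\theta & y\in[1,r\theta)\\ \varphi_r(y) & y\in[r\theta,\tfrac1r)\\ \varphi_r(\tfrac1r)+\big(\tfrac1r-\varphi_r(\tfrac1r)\big)\dfrac{y-\tfrac1r}{\rho(\theta-\tfrac1r)} & y\in[\tfrac1r,\tfrac1r+\rho(\theta-\tfrac1r))\\ \tfrac1r & y\in[\tfrac1r+\rho(\theta-\tfrac1r),\theta].\end{cases} \] *)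

From Stdlib Require Import Reals.
Open Scope R_scope.

(* varphi_r(z): the line through (r theta, r theta) and (theta, 1/r). *)
Definition varphi (theta r z : R) : R :=
  (r * theta - 1) / (1 - r) + (1 - r ^ 2 * theta) / (1 - r) * (z / (r * theta)).

Definition Phi (theta r rho y : R) : R :=
  if Rlt_dec y (r * theta) then r * theta
  else if Rlt_dec y (/ r) then varphi theta r y
  else if Rlt_dec y (/ r + rho * (theta - / r)) then
    varphi theta r (/ r)
    + (/ r - varphi theta r (/ r)) * ((y - / r) / (rho * (theta - / r)))
  else / r.

From Stdlib Require Import Reals Lra.
Open Scope R_scope.

(* On [1/r, 1/r + rho (theta - 1/r)] the graph of Phi lies below the chord
   from (r theta, r theta) to the right endpoint (e, 1/r).  For s >= 0 the
   region {(x, y) | y^(s+1) <= r theta x^s} is convex, being the hypograph of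
   the concave map x |-> (r theta)^(1/(s+1)) x^(s/(s+1)), so it suffices that
   both ends of the chord lie in it.  At r theta this is an equality; at
   e = (1/r) (1 + rho (r theta - 1)) the choice of s reduces it to the
   Bernoulli inequality (r theta)^rho <= 1 + rho (r theta - 1). *)

Lemma exp_le_exp (x y : R) : x <= y -> exp x <= exp y.
Proof. intros [Hlt | ->]; [left; apply exp_increasing | right]; auto. Qed.

Lemma Rpower_pos (x y : R) : 0 < Rpower x y.
Proof. apply exp_pos. Qed.

Lemma ln_le_sub_1 (x : R) : 0 < x -> ln x <= x - 1.
Proof.
  intros Hx. pose proof (exp_ineq1_le (ln x)) as H.
  rewrite exp_ln in H by exact Hx. lra.
Qed.

Lemma ln_concave (l x y : R) : 0 <= l <= 1 -> 0 < x -> 0 < y ->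
  (1 - l) * ln x + l * ln y <= ln ((1 - l) * x + l * y).
Proof.
  intros Hl Hx Hy.
  set (m := (1 - l) * x + l * y).
  assert (Hm : 0 < m) by (unfold m; nra).
  assert (Hdev : forall u, 0 < u -> ln u - ln m <= u / m - 1).
  { intros u Hu.
    replace (ln u - ln m) with (ln (u / m))
      by (unfold Rdiv; rewrite ln_mult, ln_Rinv by auto with real; ring).
    apply ln_le_sub_1, Rdiv_lt_0_compat; assumption. }
  assert (Hmean : (1 - l) * (x / m - 1) + l * (y / m - 1) = 0)
    by (unfold m in *; field; lra).
  pose proof (Hdev x Hx). pose proof (Hdev y Hy). nra.
Qed.

Lemma Rpower_le_bernoulli (u p : R) : 0 < u -> 0 <= p <= 1 ->
  Rpower u p <= 1 + p * (u - 1).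
Proof.
  intros Hu Hp.
  pose proof (ln_concave p 1 u Hp Rlt_0_1 Hu) as Hln.
  rewrite ln_1 in Hln.
  assert (Hm : 0 < (1 - p) * 1 + p * u) by nra.
  replace (1 + p * (u - 1)) with ((1 - p) * 1 + p * u) by ring.
  unfold Rpower. rewrite <- (exp_ln _ Hm).
  apply exp_le_exp. lra.
Qed.

Lemma Rdiv_in_unit_interval (x y : R) : 0 <= x <= y -> 0 < y -> 0 <= x / y <= 1.
Proof.
  intros Hxy Hy. pose proof (Rinv_0_lt_compat y Hy). pose proof (Rinv_r y).
  unfold Rdiv. split; nra.
Qed.

Lemma Rpower_concave (p l x y : R) : 0 <= p <= 1 -> 0 <= l <= 1 -> 0 < x -> 0 < y ->
  (1 - l) * Rpower x p + l * Rpower y p <= Rpower ((1 - l) * x + l * y) p.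
Proof.
  intros Hp Hl Hx Hy.
  set (m := (1 - l) * x + l * y).
  assert (Hm : 0 < m) by (unfold m; nra).
  assert (Htangent : forall u, 0 < u -> Rpower u p <= Rpower m p * (1 + p * (u / m - 1))).
  { intros u Hu.
    replace u with (m * (u / m)) at 1 by (field; lra).
    rewrite <- Rpower_mult_distr by (try apply Rdiv_lt_0_compat; assumption).
    apply Rmult_le_compat_l; [left; apply Rpower_pos |].
    apply Rpower_le_bernoulli; [apply Rdiv_lt_0_compat |]; assumption. }
  assert (Hmean : (1 - l) * (1 + p * (x / m - 1)) + l * (1 + p * (y / m - 1)) = 1)
    by (unfold m in *; field; lra).
  pose proof (Htangent x Hx). pose proof (Htangent y Hy).
  pose proof (Rpower_pos m p). nra.
Qed.

Lemma Rpower_le_iff_le_root (y w k : R) : 0 < y -> 0 < w -> 0 < k ->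
  Rpower y k <= w <-> y <= Rpower w (/ k).
Proof.
  intros Hy Hw Hk.
  assert (Hinv : forall v, 0 < v -> Rpower (Rpower v k) (/ k) = v).
  { intros v Hv. rewrite Rpower_mult, Rinv_r, Rpower_1; lra. }
  split; intros H.
  - rewrite <- (Hinv y Hy). apply Rle_Rpower_l; [left; apply Rinv_0_lt_compat, Hk |].
    split; [apply Rpower_pos | exact H].
  - replace w with (Rpower (Rpower w (/ k)) k)
      by (rewrite Rpower_mult, Rinv_l, Rpower_1; lra).
    apply Rle_Rpower_l; lra.
Qed.

Lemma Rpower_sublevel_convex (s c x1 y1 x2 y2 l : R) :
  0 <= s -> 0 < x1 -> 0 < y1 -> 0 < x2 -> 0 < y2 -> 0 <= l <= 1 ->
  Rpower y1 (s + 1) <= c * Rpower x1 s -> Rpower y2 (s + 1) <= c * Rpower x2 s ->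
  Rpower ((1 - l) * y1 + l * y2) (s + 1) <= c * Rpower ((1 - l) * x1 + l * x2) s.
Proof.
  intros Hs Hx1 Hy1 Hx2 Hy2 Hl H1 H2.
  assert (Hc : 0 < c).
  { pose proof (Rpower_pos y1 (s + 1)). pose proof (Rpower_pos x1 s). nra. }
  set (q := / (s + 1)).
  assert (Hq : 0 < s + 1) by lra.
  (* After taking (s+1)-th roots, concavity of x |-> x^(s q) does the work. *)
  assert (Hroot : forall x y, 0 < x -> 0 < y ->
            Rpower y (s + 1) <= c * Rpower x s <-> y <= Rpower c q * Rpower x (s * q)).
  { intros x y Hx Hy.
    rewrite Rpower_le_iff_le_root, <- Rpower_mult_distr, Rpower_mult
      by (try apply Rmult_lt_0_compat; try apply Rpower_pos; assumption).
    reflexivity. }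
  assert (Hsq : 0 <= s * q <= 1).
  { assert (0 < q) by (apply Rinv_0_lt_compat; lra).
    assert ((s + 1) * q = 1) by (unfold q; field; lra). split; nra. }
  apply Hroot in H1, H2; try assumption.
  apply Hroot; [nra | nra |].
  pose proof (Rpower_concave (s * q) l x1 x2 Hsq Hl Hx1 Hx2).
  pose proof (Rpower_pos c q). nra.
Qed.

Lemma sqr_mul_le_1_of_le_Rpower_neg_half (r theta : R) : 0 < r -> 0 < theta ->
  r <= Rpower theta (- (1 / 2)) -> r ^ 2 * theta <= 1.
Proof.
  intros Hr Htheta Hle.
  assert (Hsq : Rpower theta (- (1 / 2)) ^ 2 = / theta).
  { rewrite <- Rpower_pow, Rpower_mult by apply Rpower_pos.
    replace (- (1 / 2) * INR 2) with (Ropp 1) by (simpl; field).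
    rewrite Rpower_Ropp, Rpower_1 by exact Htheta. reflexivity. }
  assert (Hle2 : r ^ 2 <= / theta).
  { rewrite <- Hsq. apply pow_incr. lra. }
  apply (Rmult_le_compat_r theta) in Hle2; [| lra].
  rewrite Rinv_l in Hle2 by lra. exact Hle2.
Qed.

Section Phi_on_last_pieces.

Variables theta r rho s : R.
Hypothesis Htheta : 1 < theta.
Hypothesis Hr_low : / theta < r.
Hypothesis Hr_up : r ^ 2 * theta <= 1.
Hypothesis Hrho : 0 < rho <= 1.

Let a := r * theta.
Let b := / r.
Let e := b + rho * (theta - b).

Hypothesis Hs : s * (rho * ln a) = ln b - ln a.

Let r_pos : 0 < r.
Proof. pose proof (Rinv_0_lt_compat theta ltac:(lra)). lra. Qed.

Let r_lt_1 : r < 1.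
Proof. assert (r * r < 1) by nra. nra. Qed.

Let one_lt_a : 1 < a.
Proof.
  unfold a. apply (Rmult_lt_compat_r theta) in Hr_low; [| lra].
  rewrite Rinv_l in Hr_low; lra.
Qed.

Let a_le_b : a <= b.
Proof.
  assert (b * r = 1) by (unfold b; field; lra).
  unfold a. nra.
Qed.

Let theta_eq : theta = a * b.
Proof. unfold a, b. field. lra. Qed.

Let e_eq : e = b * (1 + rho * (a - 1)).
Proof. unfold e. rewrite theta_eq. ring. Qed.

Let b_lt_e : b < e.
Proof. rewrite e_eq. pose proof (Rmult_lt_0_compat rho (a - 1)). nra. Qed.

Let e_le_theta : e <= theta.
Proof. unfold e. nra. Qed.

Lemma varphi_inv : varphi theta r b = a + (b - a) ^ 2 / (theta - a).
Proof.
  unfold varphi, a, b. field. repeat split; try lra.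
  intro H. assert (theta * (1 - r) = 0) by lra. nra.
Qed.

Lemma Phi_le_chord (z : R) : b <= z <= e ->
  a <= Phi theta r rho z <= a + (b - a) * ((z - a) / (e - a)).
Proof.
  (* On [b, e] both sides are affine in z and agree at e; at b, varphi lies
     below the chord because e <= theta. *)
  intros Hz. unfold Phi. fold a b e.
  destruct (Rlt_dec z a); [lra |].
  destruct (Rlt_dec z b); [lra |].
  replace (rho * (theta - b)) with (e - b) by (unfold e; ring).
  replace (b + (e - b)) with e by ring.
  set (mu := (z - b) / (e - b)).
  assert (Hchord : a + (b - a) * ((z - a) / (e - a))
                   = (1 - mu) * (a + (b - a) * ((b - a) / (e - a))) + mu * b)
    by (unfold mu; field; lra).
  assert (Hphi : a <= varphi theta r b <= a + (b - a) * ((b - a) / (e - a))).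
  { rewrite varphi_inv. unfold Rdiv.
    assert (/ (theta - a) <= / (e - a)) by (apply Rinv_le_contravar; lra).
    pose proof (Rinv_0_lt_compat (theta - a) ltac:(lra)).
    pose proof (pow2_ge_0 (b - a)).
    replace ((b - a) * ((b - a) * / (e - a))) with ((b - a) ^ 2 * / (e - a)) by ring.
    split; nra. }
  destruct (Rlt_dec z e).
  - rewrite Hchord.
    assert (Hmu : 0 <= mu <= 1) by (apply Rdiv_in_unit_interval; lra).
    split; nra.
  - replace z with e by lra. replace ((e - a) / (e - a)) with 1 by (field; lra). lra.
Qed.

Let s_nonneg : 0 <= s.
Proof.
  assert (Hla : 0 < ln a) by (rewrite <- ln_1; apply ln_increasing; lra).
  assert (ln a <= ln b) by (destruct a_le_b as [Hlt | ->]; [left; apply ln_increasing |]; lra).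
  apply (Rmult_le_reg_r (rho * ln a)); [apply Rmult_lt_0_compat; lra |].
  rewrite Rmult_0_l, Hs. lra.
Qed.

Lemma Rpower_inv_r_le_at_end : Rpower b (s + 1) <= a * Rpower e s.
Proof.
  assert (Hg : 0 < 1 + rho * (a - 1)) by nra.
  assert (Hbernoulli : rho * ln a <= ln (1 + rho * (a - 1))).
  { replace (1 + rho * (a - 1)) with ((1 - rho) * 1 + rho * a) by ring.
    pose proof (ln_concave rho 1 a ltac:(lra) Rlt_0_1 ltac:(lra)) as H.
    rewrite ln_1 in H. lra. }
  rewrite e_eq. unfold Rpower.
  rewrite <- (exp_ln a) at 1 by lra. rewrite <- exp_plus.
  apply exp_le_exp. rewrite ln_mult by lra. nra.
Qed.

Lemma Phi_pow_ratio_le (z : R) : b <= z <= e ->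
  Rpower (Phi theta r rho z) (s + 1) / Rpower z s <= a.
Proof.
  intros Hz.
  set (l := (z - a) / (e - a)).
  assert (Hl : 0 <= l <= 1) by (apply Rdiv_in_unit_interval; lra).
  assert (Hstart : Rpower a (s + 1) <= a * Rpower a s)
    by (rewrite Rpower_plus, Rpower_1 by lra; lra).
  pose proof (Rpower_sublevel_convex s a a a e b l s_nonneg ltac:(lra) ltac:(lra)
                ltac:(lra) ltac:(lra) Hl Hstart Rpower_inv_r_le_at_end) as Hconv.
  replace ((1 - l) * a + l * e) with z in Hconv by (unfold l; field; lra).
  replace ((1 - l) * a + l * b) with (a + (b - a) * l) in Hconv by ring.
  destruct (Phi_le_chord z Hz) as [HPhi_lo HPhi_hi].
  assert (Hpow : Rpower (Phi theta r rho z) (s + 1) <= a * Rpower z s).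
  { eapply Rle_trans; [apply Rle_Rpower_l; [lra | split; [lra | exact HPhi_hi]] | exact Hconv]. }
  pose proof (Rpower_pos z s).
  apply (Rmult_le_reg_r (Rpower z s)); [assumption |].
  unfold Rdiv. rewrite Rmult_assoc, Rinv_l by lra. lra.
Qed.

End Phi_on_last_pieces.

Theorem corollary4 (theta r rho s : R) :
  1 < theta ->
  / theta < r -> r <= Rpower theta (- (1 / 2)) ->
  0 < rho -> rho <= 1 ->
  s = / rho * (ln theta / ln (r * theta) - 2) ->
  forall z : R, / r <= z <= / r + rho * (theta - / r) ->
    Rpower (Phi theta r rho z) (s + 1) / Rpower z s <= r * theta.
Proof.
  intros Htheta Hr_low Hr_up Hrho0 Hrho1 Hs z Hz.
  assert (Hr : 0 < r) by (pose proof (Rinv_0_lt_compat theta ltac:(lra)); lra).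
  assert (Ha : 1 < r * theta).
  { apply (Rmult_lt_compat_r theta) in Hr_low; [| lra]. rewrite Rinv_l in Hr_low; lra. }
  assert (Hla : 0 < ln (r * theta)) by (rewrite <- ln_1; apply ln_increasing; lra).
  assert (Hln : ln theta = ln (r * theta) + ln (/ r)).
  { rewrite <- ln_mult by (try apply Rinv_0_lt_compat; lra). f_equal. field. lra. }
  apply Phi_pow_ratio_le; try lra.
  - apply sqr_mul_le_1_of_le_Rpower_neg_half; lra.
  - rewrite Hs, Hln. field. lra.
Qed.
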